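(* Let $A$ be a finite-dimensional complex Hilbert space. Every doubly mixed vector $\Psi\in A^{\otimes 4}$ is doubly dilated.
   Context: Fix an orthonormal basis $e_1,\dots,e_d$ of $A$ (identifying $\overline{A}$ with $A$ via this basis) and identify $\Psi\in A^{\otimes 4}$ with its coefficient array $\Psi(a_1,a_2,a_3,a_4)$ with respect to $e_{a_1}\otimes e_{a_2}\otimes e_{a_3}\otimes e_{a_4}$. Doubly mixed: $\Psi$ is doubly mixed if there are finitely many indices $k=1,\dots,m$, a probability distribution $(r_k)_k$, for each $k$ finitely many unit vectors $\phi_{k1},\dots,\phi_{kn_k}\in A$ and a probability distribution $(p_{ki})_{i}$, such that, writing $\rho_k(a,b)=\sum_{i=1}^{n_k}p_{ki}\,\phi_{ki}(a)\overline{\phi_{ki}(b)}$ (where $\phi(a)$ is the $a$-th coordinate of $\phi$), we have $\Psi(a_1,a_2,a_3,a_4)=\sum_{k=1}^m r_k\,\rho_k(a_1,a_2)\,\rho_k(a_3,a_4)$ for all indices. Doubly dilated: $\Psi$ is doubly dilated if there are finite nonempty index sets $I_B, I_C$ and an arbitrary complex array $\psi(a,i,k)$ ($a\in\{1,\dots,d\}$, $i\in I_B$, $k\in I_C$), i.e. a vector in $A\otimes B\otimes C$ for finite-dimensional spaces $B,C$ with bases indexed by $I_B,I_C$, such that $\Psi(a_1,a_2,a_3,a_4)=\sum_{k,l\in I_C}\sum_{i,j\in I_B}\psi(a_1,i,k)\,\overline{\psi(a_2,i,l)}\,\psi(a_3,j,l)\,\overline{\psi(a_4,j,k)}$ for all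 indices. *)

From HB Require Import structures.
From mathcomp Require Import all_boot all_order all_algebra.
From mathcomp Require Import complex.
From mathcomp Require Import reals.
Set Implicit Arguments. Unset Strict Implicit. Unset Printing Implicit Defensive.
Import Order.TTheory GRing.Theory Num.Theory.
Local Open Scope ring_scope.

Section Defs.
Variable R : realType.
Local Notation C := R[i].

(* phi is a unit vector of A = C^d (coordinates in the fixed orthonormal basis) *)
Definition unit_vec (d : nat) (phi : 'I_d -> C) : Prop :=
  \sum_(a < d) phi a * (phi a)^* = 1.

(* p is a probability distribution on a finite index set {0..n-1};
   in C, 0 <= z means z is real and nonnegative *)
Definition prob_dist (n : nat) (p : 'I_n -> C) : Prop :=
  (forall i, 0 <= p i) /\ \sum_(i < n) p i = 1.

Definition mixed_state (d n : nat) (p : 'I_n -> C) (phi : 'I_n -> 'I_d -> C)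
  (a b : 'I_d) : C :=
  \sum_(i < n) p i * phi i a * (phi i b)^*.

Definition doubly_mixed (d : nat) (Psi : 'I_d -> 'I_d -> 'I_d -> 'I_d -> C) : Prop :=
  exists (m : nat) (r : 'I_m -> C) (n : 'I_m -> nat)
         (p : forall k : 'I_m, 'I_(n k) -> C)
         (phi : forall k : 'I_m, 'I_(n k) -> 'I_d -> C),
    prob_dist r /\
    (forall k, prob_dist (p k)) /\
    (forall k i, unit_vec (phi k i)) /\
    forall a1 a2 a3 a4,
      Psi a1 a2 a3 a4 =
      \sum_(k < m) r k * mixed_state (p k) (phi k) a1 a2
                       * mixed_state (p k) (phi k) a3 a4.

Definition doubly_dilated (d : nat) (Psi : 'I_d -> 'I_d -> 'I_d -> 'I_d -> C) : Prop :=
  exists (nB nC : nat) (psi : 'I_d -> 'I_nB -> 'I_nC -> C),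
    (0 < nB)%N /\ (0 < nC)%N /\
    forall a1 a2 a3 a4,
      Psi a1 a2 a3 a4 =
      \sum_(k < nC) \sum_(l < nC) \sum_(i < nB) \sum_(j < nB)
        psi a1 i k * (psi a2 i l)^* * psi a3 j l * (psi a4 j k)^*.
End Defs.

From HB Require Import structures.
From mathcomp Require Import all_boot all_order all_algebra.
From mathcomp Require Import complex reals.
Set Implicit Arguments. Unset Strict Implicit. Unset Printing Implicit Defensive.
Import Order.TTheory GRing.Theory Num.Theory.
Local Open Scope ring_scope.

(** Take B indexed by the pairs (k, i), C indexed by k, and
    psi(a, (k, i), c) = [k = c] r_k^(1/4) p_ki^(1/2) phi_ki(a).
    The Kronecker factor forces the four C-indices of a term to coincide and
    both B-indices to lie in the same block k; summing a block then yields
    sqrt(r_k) rho_k, so each k contributes r_k rho_k(a1, a2) rho_k(a3, a4).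
    The normalisations of r and p only make the index sets nonempty, and the
    unit norm of the phi_ki is not needed. *)

Lemma sum_tag_eq (V : nmodType) (I : finType) (J : I -> finType)
    (F : forall i, J i -> V) (i0 : I) :
  \sum_(x : {i : I & J i} | tag x == i0) F (tag x) (tagged x) = \sum_(j : J i0) F i0 j.
Proof.
transitivity (\sum_(i | i == i0) \sum_(j : J i) F i j); last by rewrite big_pred1_eq.
by rewrite sig_big_dep; apply: eq_bigl => x; rewrite andbT.
Qed.

Lemma sum_eq1_gt0 (V : nzRingType) (n : nat) (p : 'I_n -> V) :
  \sum_(i < n) p i = 1 -> (0 < n)%N.
Proof. by case: n p => // p; rewrite big_ord0 => /eqP; rewrite eq_sym oner_eq0. Qed.

Lemma sum_enum_val (V : nmodType) (T : finType) (F : T -> V) :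
  \sum_(x : T) F x = \sum_(i < #|T|) F (enum_val i).
Proof. by rewrite -big_enum_val. Qed.

Lemma sqrtC_mul_conj (C : numClosedFieldType) (x : C) :
  0 <= x -> sqrtC x * (sqrtC x)^* = x.
Proof. by move=> x_ge0; rewrite geC0_conj ?sqrtC_ge0 // -expr2 sqrtCK. Qed.

Section BlockDiagonal.
Variables (C : numClosedFieldType) (A : Type) (I J : finType).
Variables (f : I -> J) (chi : A -> I -> C).

Definition block_diag a i k := if f i == k then chi a i else 0.

Lemma block_diag_sum a1 a2 a3 a4 :
  \sum_(k : J) \sum_(l : J) \sum_(i : I) \sum_(j : I)
    block_diag a1 i k * (block_diag a2 i l)^* * block_diag a3 j l * (block_diag a4 j k)^*
  = \sum_(k : J) (\sum_(i | f i == k) chi a1 i * (chi a2 i)^*)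
                 * (\sum_(j | f j == k) chi a3 j * (chi a4 j)^*).
Proof.
apply: eq_bigr => k _.
rewrite big_distrlr /= [RHS]big_mkcond exchange_big /=; apply: eq_bigr => i _.
rewrite /block_diag; have [<- | nfik] := eqVneq (f i) k; last first.
  by rewrite big1 // => l _; apply: big1 => j _; rewrite !mul0r.
rewrite [RHS]big_mkcond exchange_big /=; apply: eq_bigr => j _.
have [fji | nfji] := eqVneq (f j) (f i); last first.
  by apply: big1 => l _; rewrite conjC0 mulr0.
rewrite (bigD1 (f i)) //= fji eqxx big1 ?addr0; first by rewrite !mulrA.
by move=> l /negbTE nli; rewrite eq_sym nli conjC0 mulr0 mul0r.
Qed.
End BlockDiagonal.

Lemma mixed_state_gram (R : realType) (d n : nat) (p : 'I_n -> R[i])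
    (phi : 'I_n -> 'I_d -> R[i]) (a b : 'I_d) :
  (forall i, 0 <= p i) ->
  mixed_state p phi a b = \sum_i (sqrtC (p i) * phi i a) * (sqrtC (p i) * phi i b)^*.
Proof.
by move=> p_ge0; apply: eq_bigr => i _; rewrite rmorphM mulrACA sqrtC_mul_conj ?mulrA.
Qed.

Lemma doubly_dilated_finType (R : realType) (d : nat)
    (Psi : 'I_d -> 'I_d -> 'I_d -> 'I_d -> R[i]) (I J : finType)
    (psi : 'I_d -> I -> J -> R[i]) :
  (0 < #|I|)%N -> (0 < #|J|)%N ->
  (forall a1 a2 a3 a4, Psi a1 a2 a3 a4 =
     \sum_(k : J) \sum_(l : J) \sum_(i : I) \sum_(j : I)
       psi a1 i k * (psi a2 i l)^* * psi a3 j l * (psi a4 j k)^*) ->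
  doubly_dilated Psi.
Proof.
move=> I_gt0 J_gt0 Psi_eq.
exists #|I|, #|J|, (fun a i k => psi a (enum_val i) (enum_val k)).
do 2!split=> //; move=> a1 a2 a3 a4; rewrite Psi_eq sum_enum_val.
apply: eq_bigr => k _; rewrite sum_enum_val; apply: eq_bigr => l _.
by rewrite sum_enum_val; apply: eq_bigr => i _; rewrite sum_enum_val.
Qed.

Theorem theorem2 (R : realType) (d : nat)
    (Psi : 'I_d -> 'I_d -> 'I_d -> 'I_d -> R[i]) :
  doubly_mixed Psi -> doubly_dilated Psi.
Proof.
move=> [m [r [n [p [phi [[r_ge0 r_sum] [p_dist [_ Psi_eq]]]]]]]].
pose w k := sqrtC (sqrtC (r k)).
pose v k (i : 'I_(n k)) a := sqrtC (p k i) * phi k i a.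
pose chi a (x : {k : 'I_m & 'I_(n k)}) := w (tag x) * v (tag x) (tagged x) a.
have block_gram k a b : \sum_(x | tag x == k) chi a x * (chi b x)^* =
    sqrtC (r k) * mixed_state (p k) (phi k) a b.
  rewrite (sum_tag_eq (fun c i => w c * v c i a * (w c * v c i b)^*)).
  rewrite (mixed_state_gram _ _ _ (p_dist k).1) mulr_sumr.
  by apply: eq_bigr => i _; rewrite rmorphM mulrACA sqrtC_mul_conj ?sqrtC_ge0.
have m_gt0 := sum_eq1_gt0 r_sum.
have n_gt0 := sum_eq1_gt0 (p_dist (Ordinal m_gt0)).2.
apply: (doubly_dilated_finType (psi := block_diag tag chi)).
- by apply/card_gt0P; exists (Tagged (fun k => 'I_(n k)) (Ordinal n_gt0)).
- by rewrite card_ord.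
move=> a1 a2 a3 a4; rewrite Psi_eq block_diag_sum; apply: eq_bigr => k _.
by rewrite !block_gram mulrACA -expr2 sqrtCK mulrA.
Qed.
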